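(* Let $\iota:B\to A$ be a central homomorphism of monoids, i.e. $B$ is commutative and $\iota(b)a=a\iota(b)$ for all $a\in A$, $b\in B$. Then: (1) a map $q:A\to B$ satisfies (ZL1), (ZL2), (ZL3) if and only if $q$ is a monoid homomorphism with $q\circ\iota=\mathrm{id}_B$; (2) any two such maps $q,q'$ that are equivalent (i.e. there is an invertible $b_0\in B$ with $q(a)b_0=q'(a\,\iota(b_0))$ for all $a\in A$) are equal; hence the canonical surjection $\mathcal Z^1(\mathsf T^l_\iota,(B,m_B))\to\mathsf{Desc}^1(\mathsf T^l_\iota,(B,m_B))$ is a bijection.
   Context: Let $\iota:B\to A$ be a monoid homomorphism. $\mathcal Z^1(\mathsf T^l_\iota,(B,m_B))$ is identified with the set of maps $q:A\to B$ satisfying (ZL1) $q(1_A)=1_B$; (ZL2) $q(\iota(b)a)=b\,q(a)$ for all $a\in A,b\in B$; (ZL3) $q(aa')=q(a\,\iota(q(a')))$ for all $a,a'\in A$. (These are exactly the Eilenberg–Moore algebra structures on the left $B$-set $B$ for the monad $A\otimes_B-$ on left $B$-sets induced by $\iota$, via $h\mapsto(a\mapsto h(a\otimes 1_B))$.) Two elements $q,q'$ are equivalent if there is an invertible $b_0\in B$ with $q(a)b_0=q'(a\,\iota(b_0))$ for all $a\in A$ (equivalently, the corresponding algebras are isomorphic); $\mathsf{Desc}^1(\mathsf T^l_\iota,(B,m_B))$ is the set of equivalence classes. *)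

Record monoid_laws {M : Type} (mul : M -> M -> M) (one : M) : Prop := {
  ml_assoc : forall x y z, mul x (mul y z) = mul (mul x y) z;
  ml_mul1 : forall x, mul one x = x;
  ml_mul1r : forall x, mul x one = x
}.

Definition monoid_hom {M N : Type} (mulM : M -> M -> M) (oneM : M)
  (mulN : N -> N -> N) (oneN : N) (f : M -> N) : Prop :=
  f oneM = oneN /\ forall x y, f (mulM x y) = mulN (f x) (f y).

Definition invertible {M : Type} (mul : M -> M -> M) (one : M) (b : M) : Prop :=
  exists c, mul b c = one /\ mul c b = one.

(* The set Z^1(T^l_iota, (B, m_B)): maps q : A -> B with (ZL1), (ZL2), (ZL3). *)
Definition ZL {A B : Type} (mulA : A -> A -> A) (oneA : A)
  (mulB : B -> B -> B) (oneB : B) (iota : B -> A) (q : A -> B) : Prop :=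
  q oneA = oneB /\
  (forall a b, q (mulA (iota b) a) = mulB b (q a)) /\
  (forall a a', q (mulA a a') = q (mulA a (iota (q a')))).

Definition ZL_equiv {A B : Type} (mulA : A -> A -> A)
  (mulB : B -> B -> B) (oneB : B) (iota : B -> A) (q q' : A -> B) : Prop :=
  exists b0, invertible mulB oneB b0 /\
    forall a, mulB (q a) b0 = q' (mulA a (iota b0)).

(* The proof rests on
   two observations.
   - Axiom (ZL2) with a = 1 gives q (iota b) = b q(1) = b, so q retracts
     iota; then (ZL2) and (ZL3), together with centrality of iota and
     commutativity of B, turn (ZL3) into multiplicativity of q.  Conversely
     a multiplicative retraction of iota satisfies (ZL1)-(ZL3) for any iota.
   - If q' is a multiplicative retraction of iota, then
     q'(a iota(b0)) = q'(a) b0, so an equivalence q(a) b0 = q'(a iota(b0))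
     reads q(a) b0 = q'(a) b0, and cancelling the invertible b0 gives q = q'.
   Neither argument uses that iota itself preserves products or the unit. *)

From Stdlib Require Import FunctionalExtensionality.

Lemma invertible_cancel_r {M : Type} (mul : M -> M -> M) (one : M) :
  monoid_laws mul one ->
  forall b x y, invertible mul one b -> mul x b = mul y b -> x = y.
Proof.
  intros [assoc _ mul1r] b x y [c [bc _]] Exy.
  rewrite <- (mul1r x), <- (mul1r y), <- bc, !assoc, Exy.
  reflexivity.
Qed.

Section DescentData.

Variables (A B : Type) (mulA : A -> A -> A) (oneA : A)
  (mulB : B -> B -> B) (oneB : B) (iota : B -> A).

Hypothesis HA : monoid_laws mulA oneA.
Hypothesis HB : monoid_laws mulB oneB.
Hypothesis HBcomm : forall b b' : B, mulB b b' = mulB b' b.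
Hypothesis Hcentral : forall (a : A) (b : B), mulA (iota b) a = mulA a (iota b).

Definition hom_retraction (q : A -> B) : Prop :=
  monoid_hom mulA oneA mulB oneB q /\ forall b : B, q (iota b) = b.

(* (ZL1) and (ZL2) at a = 1 already force q to retract iota. *)
Lemma ZL_retraction (q : A -> B) :
  ZL mulA oneA mulB oneB iota q -> forall b, q (iota b) = b.
Proof.
  intros [q1 [qB _]] b.
  rewrite <- (ml_mul1r _ _ HA (iota b)), qB, q1, (ml_mul1r _ _ HB).
  reflexivity.
Qed.

(* For central iota, (ZL3) becomes multiplicativity: q(a a') equals
   q(a iota(q a')) = q(iota(q a') a) = q(a') q(a) = q(a) q(a'). *)
Lemma ZL_hom_retraction (q : A -> B) :
  ZL mulA oneA mulB oneB iota q -> hom_retraction q.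
Proof.
  intros Zq.
  pose proof (ZL_retraction q Zq) as q_iota.
  destruct Zq as [q1 [qB qM]].
  split; [split|]; [exact q1| |exact q_iota].
  intros a a'.
  rewrite qM, <- Hcentral, qB, HBcomm.
  reflexivity.
Qed.

Lemma hom_retraction_ZL (q : A -> B) :
  hom_retraction q -> ZL mulA oneA mulB oneB iota q.
Proof.
  intros [[q1 qM] q_iota].
  split; [exact q1|split].
  - intros a b. rewrite qM, q_iota. reflexivity.
  - intros a a'. rewrite !qM, q_iota. reflexivity.
Qed.

(* Part (2): an equivalence onto a multiplicative retraction q' is trivial,
   because q'(a iota(b0)) = q'(a) b0 and b0 can be cancelled. *)
Lemma ZL_equiv_hom_retraction_eq (q q' : A -> B) :
  hom_retraction q' -> ZL_equiv mulA mulB oneB iota q q' -> q = q'.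
Proof.
  intros [[_ q'M] q'_iota] [b0 [b0_inv Eq]].
  apply functional_extensionality; intro a.
  apply (invertible_cancel_r mulB oneB HB b0); [exact b0_inv|].
  rewrite Eq, q'M, q'_iota.
  reflexivity.
Qed.

End DescentData.

Theorem proposition3p9 (A B : Type)
  (mulA : A -> A -> A) (oneA : A) (mulB : B -> B -> B) (oneB : B)
  (HA : monoid_laws mulA oneA) (HB : monoid_laws mulB oneB)
  (iota : B -> A) (Hiota : monoid_hom mulB oneB mulA oneA iota)
  (HBcomm : forall b b' : B, mulB b b' = mulB b' b)
  (Hcentral : forall (a : A) (b : B), mulA (iota b) a = mulA a (iota b)) :
  (forall q : A -> B,
     ZL mulA oneA mulB oneB iota q <->
     (monoid_hom mulA oneA mulB oneB q /\ forall b : B, q (iota b) = b)) /\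
  (forall q q' : A -> B,
     ZL mulA oneA mulB oneB iota q -> ZL mulA oneA mulB oneB iota q' ->
     ZL_equiv mulA mulB oneB iota q q' -> q = q').
Proof.
  split.
  - intro q. split.
    + exact (ZL_hom_retraction A B mulA oneA mulB oneB iota HA HB
               HBcomm Hcentral q).
    + exact (hom_retraction_ZL A B mulA oneA mulB oneB iota q).
  - intros q q' _ Zq'.
    apply (ZL_equiv_hom_retraction_eq A B mulA oneA mulB oneB iota HB).
    exact (ZL_hom_retraction A B mulA oneA mulB oneB iota HA HB
             HBcomm Hcentral q' Zq').
Qed.
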